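(* Let $u_{\varepsilon,\ell}$ be a 3iet word with parameters $\varepsilon,\ell$ and let ${\rm ind}(u_{\varepsilon,\ell})=+\infty$. Then $\sup_{n\in\mathbb N} a_n = +\infty$, where $a_n$ are the partial quotients of the continued fraction $\varepsilon=[0,a_1,a_2,\dots]$.
   Context: Parameters $\varepsilon,\ell$ satisfy $\varepsilon\in(0,1)\setminus\mathbb Q$ and $\max\{\varepsilon,1-\varepsilon\}<\ell<1$. The three interval exchange $T_{\varepsilon,\ell}:[0,\ell)\to[0,\ell)$ is defined by $T_{\varepsilon,\ell}(x)=x+1-\varepsilon$ for $x\in I_A:=[0,\ell-1+\varepsilon)$, $T_{\varepsilon,\ell}(x)=x+1-2\varepsilon$ for $x\in I_B:=[\ell-1+\varepsilon,\varepsilon)$, and $T_{\varepsilon,\ell}(x)=x-\varepsilon$ for $x\in I_C:=[\varepsilon,\ell)$. A 3iet word with parameters $\varepsilon,\ell$ is the word $u=(u_n)_{n\in\mathbb N}$ over $\{A,B,C\}$ with $u_n=X$ iff $T_{\varepsilon,\ell}^n(x_0)\in I_X$, for some $x_0\in[0,\ell)$; its language and index do not depend on $x_0$. A word $v$ is a power $w^r$ ($r=|v|/|w|$) if $|v|\ge|w|$ and $v$ is a prefix of $www\cdots$; ${\rm ind}(w)=\sup\{r\in\mathbb Q: w^r \text{ is a factor of } u\}$ and ${\rm ind}(u)=\sup\{{\rm ind}(w): w \text{ a factor of } u\}$. *)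

From Stdlib Require Import Reals List Arith ZArith.
Open Scope R_scope.

Inductive letter := A | B | C.

(* floor via Stdlib's [up]: up x is the unique integer with x < up x <= x + 1 *)
Definition floorR (x : R) : Z := (up x - 1)%Z.

Definition irrational (x : R) : Prop :=
  ~ exists (p q : Z), q <> 0%Z /\ x = IZR p / IZR q.

Definition T3 (eps l x : R) : R :=
  if Rlt_dec x (l - 1 + eps) then x + 1 - eps
  else if Rlt_dec x eps then x + 1 - 2 * eps
  else x - eps.

Definition letter_of (eps l x : R) : letter :=
  if Rlt_dec x (l - 1 + eps) then A
  else if Rlt_dec x eps then B
  else C.

Definition iet3_word (eps l x0 : R) (n : nat) : letter :=
  letter_of eps l (Nat.iter n (T3 eps l) x0).

Definition factor (u : nat -> letter) (v : list letter) : Prop :=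
  exists i : nat, forall k : nat, (k < length v)%nat -> nth k v A = u (i + k)%nat.

(* v is a power w^r (r = |v|/|w|) of the nonempty word w *)
Definition is_power (v w : list letter) : Prop :=
  w <> nil /\ (length w <= length v)%nat /\
  forall k : nat, (k < length v)%nat -> nth k v A = nth (k mod length w) w A.

(* ind(u) = +infinity : the set of exponents r = |v|/|w| of factors v = w^r
   (over all nonempty factors w) is unbounded *)
Definition index_infinite (u : nat -> letter) : Prop :=
  forall M : R, exists v w : list letter,
    factor u w /\ factor u v /\ is_power v w /\
    M < INR (length v) / INR (length w).

Fixpoint cf_rem (eps : R) (n : nat) : R :=
  match n with
  | O => eps
  | S m => / cf_rem eps m - IZR (floorR (/ cf_rem eps m))
  end.

(* partial quotients: eps = [0; a_1, a_2, ...], a_{n+1} = floor(1/x_n) *)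
Definition cf_pq (eps : R) (n : nat) : Z := floorR (/ cf_rem eps (n - 1)).

(* The 3iet T is the first return map to [0, l) of the rotation by -eps, so
   T^m y = y - N eps + I with m <= N <= 2m, and the orbit of y visits the
   rotation orbit points in [0, l) in order. Suppose the partial quotients are
   bounded by M. Then eps is badly approximable, |N eps - I| >= 1/((M+2) N), and
   the first K points of every rotation orbit are (M+2)/K-dense (a walk along
   two consecutive convergent denominators). A factor w^r with |w| = m makes
   T^m act on K = |w^r| - m + 1 consecutive orbit points as one translation by
   delta = I - N eps; this translation keeps a (M+2)/K-dense set inside [0, l),
   so |delta| <= (M+2)/K, whence K <= 2 (M+2)^2 m and r is bounded. *)

From Stdlib Require Import Reals ZArith Lia Lra Psatz Classical.
Open Scope R_scope.

Lemma floorR_spec x : IZR (floorR x) <= x < IZR (floorR x) + 1.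
Proof.
  unfold floorR; destruct (archimed x) as [H1 H2].
  rewrite minus_IZR; change (IZR 1) with 1; lra.
Qed.

Lemma irrational_neq0 x : irrational x -> x <> 0.
Proof.
  intros Hx ->; apply Hx; exists 0%Z, 1%Z; split; [lia|].
  unfold Rdiv; rewrite Rmult_0_l; reflexivity.
Qed.

Lemma irrational_sub_IZR x z : irrational x -> irrational (x - IZR z).
Proof.
  intros Hx (p & q & Hq & E); apply Hx.
  exists (p + z * q)%Z, q; split; [exact Hq|].
  apply not_0_IZR in Hq.
  replace x with (x - IZR z + IZR z) by ring.
  rewrite E, plus_IZR, mult_IZR; field; exact Hq.
Qed.

Lemma irrational_inv x : irrational x -> irrational (/ x).
Proof.
  intros Hx (p & q & Hq & E); apply Hx.
  rewrite <- (Rinv_inv x), E.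
  destruct (Z.eq_dec p 0) as [->|Hp].
  - exists 0%Z, 1%Z; split; [lia|].
    unfold Rdiv; rewrite !Rmult_0_l, Rinv_0; reflexivity.
  - exists q, p; split; [exact Hp|].
    field; split; apply not_0_IZR; assumption.
Qed.

Lemma gauss_map_spec x : 0 < x < 1 -> irrational x ->
  0 < / x - IZR (floorR (/ x)) < 1 /\ irrational (/ x - IZR (floorR (/ x))).
Proof.
  intros Hx Hirr.
  assert (Hfrac : irrational (/ x - IZR (floorR (/ x))))
    by apply irrational_sub_IZR, irrational_inv, Hirr.
  pose proof (floorR_spec (/ x)) as Hfl.
  pose proof (irrational_neq0 _ Hfrac).
  repeat split; [|lra|exact Hfrac].
  destruct Hfl; lra.
Qed.

Lemma cf_rem_spec eps : 0 < eps < 1 -> irrational eps ->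
  forall k, 0 < cf_rem eps k < 1 /\ irrational (cf_rem eps k).
Proof.
  intros Heps Hirr k; induction k as [|k [IH1 IH2]]; [auto|].
  apply gauss_map_spec; assumption.
Qed.

(* [partial_quotient eps k] is a_{k+1} in eps = [0; a_1, a_2, ...]. *)
Definition partial_quotient (eps : R) (k : nat) : Z := floorR (/ cf_rem eps k).

Lemma cf_pq_S eps k : cf_pq eps (S k) = partial_quotient eps k.
Proof. unfold cf_pq, partial_quotient; simpl; rewrite Nat.sub_0_r; reflexivity. Qed.

Lemma cf_rem_S eps k :
  cf_rem eps (S k) = / cf_rem eps k - IZR (partial_quotient eps k).
Proof. reflexivity. Qed.

Lemma partial_quotient_ge1 eps : 0 < eps < 1 -> irrational eps ->
  forall k, (1 <= partial_quotient eps k)%Z.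
Proof.
  intros Heps Hirr k.
  destruct (cf_rem_spec eps Heps Hirr k) as [Hx _].
  assert (1 < / cf_rem eps k) by (rewrite <- Rinv_1; apply Rinv_lt_contravar; lra).
  destruct (floorR_spec (/ cf_rem eps k)) as [_ Hfl].
  assert (Hpos : IZR 0 < IZR (floorR (/ cf_rem eps k))) by lra.
  apply lt_IZR in Hpos; unfold partial_quotient; lia.
Qed.

Section Continuants.

Variable a : nat -> Z.

(* With (u0, u1) = (0, 1) resp. (1, 0), index k gives q_{k-1} resp. p_{k-1}. *)
Fixpoint continuant (u0 u1 : Z) (k : nat) : Z :=
  match k with
  | O => u0
  | S O => u1
  | S ((S j) as k') => (a j * continuant u0 u1 k' + continuant u0 u1 j)%Z
  end.

Lemma continuant_SS u0 u1 k :
  continuant u0 u1 (S (S k)) = (a k * continuant u0 u1 (S k) + continuant u0 u1 k)%Z.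
Proof. reflexivity. Qed.

Local Notation q := (continuant 0 1).
Local Notation p := (continuant 1 0).

Lemma continuant_det k : Z.abs (q k * p (S k) - q (S k) * p k) = 1%Z.
Proof.
  induction k as [|k IH]; [reflexivity|].
  rewrite continuant_SS, continuant_SS.
  replace (_ - _)%Z with (- (q k * p (S k) - q (S k) * p k))%Z by ring.
  rewrite Z.abs_opp; exact IH.
Qed.

Hypothesis a_ge1 : forall k, (1 <= a k)%Z.

Lemma continuant_growth k : (0 <= q k <= q (S k))%Z /\ (Z.of_nat k < q k + q (S k))%Z.
Proof.
  induction k as [|k IH]; [simpl; lia|].
  rewrite continuant_SS; pose proof (a_ge1 k); nia.
Qed.

Lemma continuant_bounded (M : Z) : (forall k, (a k <= M)%Z) ->
  forall k, (q (S (S k)) <= (M + 1) * q (S k))%Z.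
Proof.
  intros HM k; rewrite continuant_SS.
  pose proof (HM k); pose proof (continuant_growth k); nia.
Qed.

End Continuants.

Lemma unimodular_coords (q0 q1 p0 p1 N P : Z) : Z.abs (q0 * p1 - q1 * p0) = 1%Z ->
  exists x y, N = (x * q0 + y * q1)%Z /\ P = (x * p0 + y * p1)%Z.
Proof.
  intros Hdet; set (d := (q0 * p1 - q1 * p0)%Z) in Hdet.
  assert (Hd : (d * d = 1)%Z) by (destruct (Z.abs_spec d); lia).
  exists (d * (N * p1 - P * q1))%Z, (d * (P * q0 - N * p0))%Z.
  split; [transitivity (N * (d * d))%Z | transitivity (P * (d * d))%Z];
    solve [rewrite Hd; ring | unfold d; ring].
Qed.

Lemma Z_seq_crossing (f : nat -> Z) (N : Z) (K : nat) :
  (f O <= N)%Z -> (N < f K)%Z -> exists k, (f k <= N < f (S k))%Z.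
Proof.
  intros H0; induction K as [|K IH]; intros HK; [lia|].
  destruct (Z_le_gt_dec (f K) N); [exists K; lia | apply IH; lia].
Qed.

Lemma Rabs_combination_ge (x y e f : R) : e * f < 0 ->
  (1 <= x /\ y <= 0) \/ (x <= -1 /\ 0 <= y) -> Rabs e <= Rabs (x * e + y * f).
Proof.
  intros Hef Hxy.
  unfold Rabs; destruct (Rcase_abs e), (Rcase_abs (x * e + y * f)); nra.
Qed.

Lemma increments_hit_window (f : nat -> R) (b c T : R) : 0 < c ->
  (forall j, c <= f (S j) - f j <= b) -> f O <= T -> exists j, T <= f j <= T + b.
Proof.
  intros Hc Hstep H0.
  assert (Hcross : forall j, T <= f j -> exists j', T <= f j' <= T + b).
  { induction j as [|j IH]; intros Hj; [exists O; specialize (Hstep O); lra|].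
    destruct (Rle_dec T (f j)); [now apply IH|].
    exists (S j); specialize (Hstep j); lra. }
  assert (Hlin : forall j, f O + INR j * c <= f j).
  { induction j as [|j IH]; [simpl; lra|].
    rewrite S_INR; specialize (Hstep j); lra. }
  destruct (INR_archimed c (T - f O) Hc) as [n Hn].
  apply (Hcross n); specialize (Hlin n); lra.
Qed.

Section Walk.

Variables (g b c : R) (u v : nat) (P P' : Z).
Hypothesis c_pos : 0 < c.
Hypothesis c_le_b : c <= b.
Hypothesis v_pos : (1 <= v)%nat.
Hypothesis u_jump : INR u * g - IZR P = b.
Hypothesis v_jump : INR v * g - IZR P' = - c.

(* Staying in 0 <= n < u + v, each move n -> n + u or n -> n - v advances
   y + n g by b or by c modulo 1. *)
Definition walk_step (s : nat * R) : nat * R :=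
  let (n, x) := s in
  if Nat.ltb n v then ((n + u)%nat, x + b) else ((n - v)%nat, x + c).

Lemma walk_invariant y j : let s := Nat.iter j walk_step (O, y) in
  (fst s < u + v)%nat /\ exists m : Z, snd s = y + INR (fst s) * g + IZR m.
Proof.
  induction j as [|j [Hn [m Hm]]]; simpl.
  - split; [lia|]; exists 0%Z; simpl; ring.
  - destruct (Nat.iter j walk_step (O, y)) as [n x]; simpl in *.
    destruct (Nat.ltb_spec n v); simpl; split; try lia.
    + exists (m - P)%Z; rewrite Hm, plus_INR, minus_IZR; lra.
    + exists (m + P')%Z; rewrite Hm, minus_INR, plus_IZR by lia; lra.
Qed.

Lemma walk_dense y t :
  exists n, (n < u + v)%nat /\ exists m : Z, t <= y + INR n * g + IZR m <= t + b.
Proof.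
  destruct (archimed (y - t)) as [Hup _].
  destruct (increments_hit_window (fun j => snd (Nat.iter j walk_step (O, y)))
              b c (t + IZR (up (y - t)))) as [j Hj]; simpl; try lra.
  - intros j; simpl; destruct (Nat.iter j walk_step (O, y)) as [n x]; simpl.
    destruct (Nat.ltb n v); simpl; lra.
  - destruct (walk_invariant y j) as [Hn [m Hm]].
    exists (fst (Nat.iter j walk_step (O, y))); split; [exact Hn|].
    exists (m - up (y - t))%Z; rewrite minus_IZR; lra.
Qed.

End Walk.

Lemma walk_dense_signed (g b c : R) (u v : nat) (P P' : Z) : 0 < c <= b -> (1 <= v)%nat ->
  (INR u * g - IZR P = b /\ INR v * g - IZR P' = - c) \/
  (INR u * g - IZR P = - b /\ INR v * g - IZR P' = c) ->
  forall y t, exists n, (n < u + v)%nat /\ exists m : Z, t <= y + INR n * g + IZR m <= t + b.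
Proof.
  intros Hcb Hv [[Hu Hv']|[Hu Hv']] y t.
  - apply (walk_dense g b c u v P P'); tauto.
  - assert (Hu' : INR u * - g - IZR (- P) = b) by (rewrite opp_IZR; lra).
    assert (Hv'' : INR v * - g - IZR (- P') = - c) by (rewrite opp_IZR; lra).
    destruct (walk_dense (- g) b c u v (- P) (- P') ltac:(lra) ltac:(lra) Hv Hu' Hv''
                (- y) (- (t + b))) as [n [Hn [m Hm]]].
    exists n; split; [exact Hn|]; exists (- m)%Z; rewrite opp_IZR; lra.
Qed.

Section ContinuedFraction.

Variable eps : R.
Hypothesis eps_bounds : 0 < eps < 1.
Hypothesis eps_irrational : irrational eps.

Local Notation a := (partial_quotient eps).
Local Notation q := (continuant a 0 1).
Local Notation p := (continuant a 1 0).

Definition conv_err (k : nat) : R := IZR (q k) * eps - IZR (p k).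

Lemma conv_err_SS k : conv_err (S (S k)) = IZR (a k) * conv_err (S k) + conv_err k.
Proof. unfold conv_err; rewrite !continuant_SS, !plus_IZR, !mult_IZR; ring. Qed.

(* So |q_k eps - p_k| = x_0 x_1 ... x_k, with alternating signs. *)
Lemma conv_err_S k : conv_err (S k) = - cf_rem eps k * conv_err k.
Proof.
  induction k as [|k IH]; [unfold conv_err; simpl; ring|].
  destruct (cf_rem_spec eps eps_bounds eps_irrational k) as [Hx _].
  rewrite conv_err_SS, cf_rem_S, IH; field; lra.
Qed.

Lemma conv_err_alternate k : conv_err k * conv_err (S k) < 0.
Proof.
  assert (Hnz : forall j, conv_err j <> 0).
  { induction j as [|j IH]; [unfold conv_err; simpl; lra|].
    destruct (cf_rem_spec eps eps_bounds eps_irrational j) as [Hx _].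
    rewrite conv_err_S; intros Hz; apply Rmult_integral in Hz; destruct Hz; lra. }
  destruct (cf_rem_spec eps eps_bounds eps_irrational k) as [Hx _].
  pose proof (Rsqr_pos_lt _ (Hnz k)); unfold Rsqr in *.
  rewrite conv_err_S; nra.
Qed.

Lemma conv_err_decr k : Rabs (conv_err (S k)) <= Rabs (conv_err k).
Proof.
  destruct (cf_rem_spec eps eps_bounds eps_irrational k) as [Hx _].
  rewrite conv_err_S, Rabs_mult, Rabs_Ropp, (Rabs_pos_eq (cf_rem eps k)) by lra.
  pose proof (Rabs_pos (conv_err k)); nra.
Qed.

Lemma conv_err_unit k :
  IZR (q (S k)) * Rabs (conv_err k) + IZR (q k) * Rabs (conv_err (S k)) = 1.
Proof.
  pose proof (continuant_det a k) as Hdet.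
  assert (Hid : IZR (q k * p (S k) - q (S k) * p k)
                = IZR (q (S k)) * conv_err k - IZR (q k) * conv_err (S k))
    by (unfold conv_err; rewrite minus_IZR, !mult_IZR; ring).
  assert (Hsign : (q k * p (S k) - q (S k) * p k = 1
                   \/ q k * p (S k) - q (S k) * p k = -1)%Z) by lia.
  destruct (continuant_growth a (partial_quotient_ge1 eps eps_bounds eps_irrational) k)
    as [[Hq0 Hq1] _].
  apply IZR_le in Hq0; apply IZR_le in Hq1.
  pose proof (conv_err_alternate k).
  destruct Hsign as [Hs|Hs]; rewrite Hs in Hid;
    destruct (Rlt_or_le 0 (conv_err k));
    rewrite ?(Rabs_pos_eq (conv_err k)), ?(Rabs_left (conv_err (S k))),
      ?(Rabs_left1 (conv_err k)), ?(Rabs_pos_eq (conv_err (S k))) by nra; nra.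
Qed.


Local Notation conv_den_growth :=
  (continuant_growth a (partial_quotient_ge1 eps eps_bounds eps_irrational)).

Variable M : Z.
Hypothesis a_le_M : forall k, (a k <= M)%Z.

Local Notation conv_den_bounded :=
  (continuant_bounded a (partial_quotient_ge1 eps eps_bounds eps_irrational) M a_le_M).

Lemma bound_ge1 : (1 <= M)%Z.
Proof.
  pose proof (a_le_M O); pose proof (partial_quotient_ge1 eps eps_bounds eps_irrational O).
  lia.
Qed.

Lemma conv_err_lower k : 1 <= (IZR M + 2) * IZR (q (S k)) * Rabs (conv_err (S k)).
Proof.
  pose proof (conv_err_unit (S k)); pose proof (conv_err_decr (S k)).
  pose proof (conv_den_bounded k) as Hq.
  destruct (conv_den_growth (S k)) as [[Hq0 _] _].
  apply IZR_le in Hq, Hq0; rewrite mult_IZR, plus_IZR in Hq.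
  pose proof (Rabs_pos (conv_err (S (S k)))); nra.
Qed.

Lemma badly_approximable (N : nat) (P : Z) : (1 <= N)%nat ->
  1 <= (IZR M + 2) * INR N * Rabs (INR N * eps - IZR P).
Proof.
  intros HN.
  destruct (Z_seq_crossing (fun j => q (S j)) (Z.of_nat N) (2 * N)) as [j [Hj1 Hj2]];
    [simpl; lia | destruct (conv_den_growth (2 * N)); lia |].
  destruct (unimodular_coords _ _ _ _ (Z.of_nat N) P (continuant_det a (S j)))
    as (x & y & EN & EP).
  destruct (conv_den_growth (S j)) as [[Hq0 _] _].
  assert (Hxy : (1 <= IZR x /\ IZR y <= 0) \/ (IZR x <= -1 /\ 0 <= IZR y)).
  { destruct (Z_le_gt_dec 1 y); [right | left]; split; apply IZR_le; nia. }
  assert (Hcomb : INR N * eps - IZR P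
                  = IZR x * conv_err (S j) + IZR y * conv_err (S (S j))).
  { rewrite INR_IZR_INZ, EN, EP; unfold conv_err; rewrite !plus_IZR, !mult_IZR; ring. }
  pose proof (Rabs_combination_ge _ _ _ _ (conv_err_alternate (S j)) Hxy) as Hge.
  rewrite <- Hcomb in Hge.
  assert (Hq : IZR (q (S j)) <= INR N) by (rewrite INR_IZR_INZ; apply IZR_le; lia).
  pose proof bound_ge1 as HM; apply IZR_le in HM, Hq0.
  apply Rle_trans with (1 := conv_err_lower j).
  apply Rmult_le_compat; [|apply Rabs_pos| |exact Hge]; nra.
Qed.

Lemma conv_err_upper j (K : nat) : (Z.of_nat K < q (S j) + q (S (S j)))%Z ->
  Rabs (conv_err j) * INR K <= IZR M + 2.
Proof.
  intros HK.
  pose proof (conv_den_bounded j) as Hq.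
  destruct (conv_den_growth (S j)) as [[Hq0 _] _].
  pose proof (conv_err_unit j) as Hunit.
  destruct (conv_den_growth j) as [[Hq1 _] _].
  apply IZR_lt in HK; apply IZR_le in Hq, Hq0, Hq1.
  rewrite <- INR_IZR_INZ, plus_IZR in HK; rewrite mult_IZR, plus_IZR in Hq.
  pose proof (Rabs_pos (conv_err j)); pose proof (Rabs_pos (conv_err (S j))).
  assert (HQe : IZR (q (S j)) * Rabs (conv_err j) <= 1) by nra.
  assert (HKQ : INR K <= (IZR M + 2) * IZR (q (S j))) by lra.
  pose proof bound_ge1 as HM; apply IZR_le in HM.
  nra.
Qed.

Lemma rotation_points_dense (K : nat) y t : (1 <= K)%nat ->
  exists n, (n < K)%nat /\
  exists m : Z, t <= y - INR n * eps + IZR m <= t + (IZR M + 2) / INR K.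
Proof.
  intros HK.
  destruct (Z_seq_crossing (fun j => q j + q (S j))%Z (Z.of_nat K) K) as [j [Hj1 Hj2]];
    [simpl; lia | destruct (conv_den_growth K); lia |].
  destruct (conv_den_growth j) as [[Hq0 Hq1] Hq2].
  assert (Hnat : forall z, (0 <= z)%Z -> INR (Z.to_nat z) = IZR z)
    by (intros z Hz; rewrite INR_IZR_INZ, Z2Nat.id; auto).
  pose proof (conv_err_alternate j) as Halt.
  destruct (walk_dense_signed (- eps) (Rabs (conv_err j)) (Rabs (conv_err (S j)))
              (Z.to_nat (q j)) (Z.to_nat (q (S j))) (- p j) (- p (S j)))
    with (y := y) (t := t) as [n [Hn [m Hm]]].
  - split; [apply Rabs_pos_lt; intros Hz; rewrite Hz in Halt; lra | apply conv_err_decr].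
  - lia.
  - rewrite !Hnat, !opp_IZR by lia; unfold conv_err.
    destruct (Rlt_or_le (conv_err j) 0); [left | right]; unfold conv_err in *;
      rewrite ?(Rabs_left (_ - _)), ?(Rabs_pos_eq (_ - _)), ?(Rabs_left1 (_ - _)) by nra;
      split; ring.
  - exists n; split; [lia|]; exists m.
    assert (HKpos : 0 < INR K) by (apply lt_0_INR; lia).
    pose proof (conv_err_upper j K Hj2).
    assert (Rabs (conv_err j) <= (IZR M + 2) / INR K)
      by (apply Rmult_le_reg_r with (INR K); [lra|]; unfold Rdiv;
          rewrite Rmult_assoc, Rinv_l, Rmult_1_r by lra; lra).
    lra.
Qed.

End ContinuedFraction.

Lemma eq_of_sub_IZR (x y : R) (z : Z) : 0 <= x < 1 -> 0 <= y < 1 -> x - y = IZR z -> x = y.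
Proof.
  intros Hx Hy E.
  assert (z = 0%Z) by (apply one_IZR_lt1; lra).
  subst z; simpl in E; lra.
Qed.

Section ThreeIntervalExchange.

Variables eps l : R.
Hypothesis eps_bounds : 0 < eps < 1.
Hypothesis l_lower : Rmax eps (1 - eps) < l.
Hypothesis l_upper : l < 1.

Local Notation T := (T3 eps l).

(* T is the first return map to [0, l) of the rotation x -> x - eps mod 1:
   points of I_B need two rotation steps, the first one landing in [l, 1). *)
Definition rotation_steps (X : letter) : nat := match X with B => 2%nat | _ => 1%nat end.
Definition wrap (X : letter) : Z := match X with A | B => 1 | _ => 0 end.

Lemma T3_rotation x : T x =
  x - INR (rotation_steps (letter_of eps l x)) * eps + IZR (wrap (letter_of eps l x)).
Proof.
  unfold T3, letter_of.
  destruct (Rlt_dec x (l - 1 + eps)); [|destruct (Rlt_dec x eps)]; simpl; ring.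
Qed.

Lemma letter_B_bounds x : letter_of eps l x = B -> l - 1 + eps <= x < eps.
Proof.
  unfold letter_of; destruct (Rlt_dec x (l - 1 + eps)); [discriminate|].
  destruct (Rlt_dec x eps); [lra | discriminate].
Qed.

Lemma iter_T3_range x n : 0 <= x < l -> 0 <= Nat.iter n T x < l.
Proof.
  intros Hx; induction n as [|n IH]; [exact Hx|]; simpl.
  set (z := Nat.iter n T x) in *.
  pose proof (Rmax_l eps (1 - eps)); pose proof (Rmax_r eps (1 - eps)).
  unfold T3; destruct (Rlt_dec z (l - 1 + eps)); [lra|].
  destruct (Rlt_dec z eps); lra.
Qed.

Lemma iter_T3_rotation y k : 0 <= y < l ->
  exists (N : nat) (I : Z), (k <= N <= 2 * k)%nat /\
  Nat.iter k T y = y - INR N * eps + IZR I /\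
  forall n, (n < N)%nat -> forall m : Z, 0 <= y - INR n * eps + IZR m < l ->
    exists j, (j < k)%nat /\ Nat.iter j T y = y - INR n * eps + IZR m.
Proof.
  intros Hy; induction k as [|k (N & I & HN & E & Hvis)].
  - exists O, 0%Z; repeat split; [lia | lia | simpl; ring | intros; lia].
  - set (z := Nat.iter k T y) in *.
    pose proof (iter_T3_range y k Hy) as Hz; fold z in Hz.
    exists (N + rotation_steps (letter_of eps l z))%nat, (I + wrap (letter_of eps l z))%Z.
    split; [destruct (letter_of eps l z); simpl; lia|].
    split; [simpl; fold z; rewrite T3_rotation, E at 1; rewrite plus_INR, plus_IZR; ring|].
    intros n Hn m Hp.
    destruct (Nat.lt_ge_cases n N) as [h|h].
    + destruct (Hvis n h m Hp) as [j [Hj Ej]]; exists j; split; [lia | exact Ej].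
    + destruct (Nat.eq_dec n N) as [->|Hne].
      * exists k; split; [lia|]; fold z.
        apply eq_of_sub_IZR with (z := (I - m)%Z); try lra.
        rewrite E, minus_IZR; ring.
      * exfalso; destruct (letter_of eps l z) eqn:HL; simpl in Hn; try lia.
        assert (n = S N) as -> by lia.
        apply letter_B_bounds in HL.
        assert (z + 1 - eps = y - INR (S N) * eps + IZR m); [|lra].
        apply eq_of_sub_IZR with (z := (I + 1 - m)%Z); try lra.
        rewrite E, S_INR, minus_IZR, plus_IZR; simpl; ring.
Qed.

Lemma rotation_point_visited y n (m : Z) : 0 <= y < l ->
  0 <= y - INR n * eps + IZR m < l ->
  exists j, (j <= n)%nat /\ Nat.iter j T y = y - INR n * eps + IZR m.
Proof.
  intros Hy Hp.
  destruct (iter_T3_rotation y (S n) Hy) as (N & I & HN & _ & Hvis).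
  destruct (Hvis n ltac:(lia) m Hp) as [j [Hj E]]; exists j; split; [lia | exact E].
Qed.

End ThreeIntervalExchange.

Section BoundedPartialQuotients.

Variables eps l : R.
Variable M : Z.
Hypothesis eps_bounds : 0 < eps < 1.
Hypothesis eps_irrational : irrational eps.
Hypothesis l_lower : Rmax eps (1 - eps) < l.
Hypothesis l_upper : l < 1.
Hypothesis a_le_M : forall k, (partial_quotient eps k <= M)%Z.

Local Notation T := (T3 eps l).
Local Notation z y j := (Nat.iter j T y).

Lemma T3_orbit_dense y (K : nat) t : 0 <= y < l -> (1 <= K)%nat ->
  0 <= t -> t + (IZR M + 2) / INR K < l ->
  exists j, (j < K)%nat /\ t <= z y j <= t + (IZR M + 2) / INR K.
Proof.
  intros Hy HK Ht Htl.
  destruct (rotation_points_dense eps eps_bounds eps_irrational M a_le_M K y t HK)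
    as (n & Hn & m & Hm).
  destruct (rotation_point_visited eps l eps_bounds l_lower l_upper y n m Hy)
    as (j & Hj & E); [lra|].
  exists j; split; [lia|]; rewrite E; lra.
Qed.

Lemma orbit_translate_small y (K : nat) delta : 0 <= y < l -> (1 <= K)%nat ->
  (forall j, (j < K)%nat -> 0 <= z y j + delta < l) ->
  Rabs delta * INR K <= IZR M + 2.
Proof.
  intros Hy HK Hshift.
  assert (HKpos : 0 < INR K) by (apply lt_0_INR; lia).
  apply Rnot_lt_le; intros Hbig.
  assert (Hgap : (IZR M + 2) / INR K < Rabs delta)
    by (apply Rmult_lt_reg_r with (INR K); [lra|]; unfold Rdiv;
        rewrite Rmult_assoc, Rinv_l, Rmult_1_r by lra; lra).
  pose proof (Hshift O ltac:(lia)); simpl in *.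
  unfold Rabs in Hgap; destruct (Rcase_abs delta).
  - destruct (T3_orbit_dense y K 0 Hy HK) as (j & Hj & Hzj); [lra | lra |].
    specialize (Hshift j Hj); lra.
  - destruct (T3_orbit_dense y K (l - delta) Hy HK) as (j & Hj & Hzj); [lra | lra |].
    specialize (Hshift j Hj); lra.
Qed.

Lemma T3_same_letter_same_jump x x' : letter_of eps l x = letter_of eps l x' ->
  T x - x = T x' - x'.
Proof. intros E; rewrite !T3_rotation, E; ring. Qed.

Lemma periodic_block_bound y (m K : nat) : 0 <= y < l -> (1 <= m)%nat -> (1 <= K)%nat ->
  (forall k, (S k < K)%nat -> letter_of eps l (z y k) = letter_of eps l (z y (k + m))) ->
  INR K <= 2 * (IZR M + 2) ^ 2 * INR m.
Proof.
  intros Hy Hm HK Hper.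
  set (delta := z y m - y).
  assert (Hconst : forall j, (j < K)%nat -> z y (j + m) - z y j = delta).
  { induction j as [|j IH]; intros Hj; [reflexivity|].
    rewrite <- IH by lia; simpl.
    pose proof (T3_same_letter_same_jump (z y j) (z y (j + m)) (Hper j Hj)); lra. }
  destruct (iter_T3_rotation eps l eps_bounds l_lower l_upper y m Hy)
    as (N & I & HN & E & _).
  assert (Hlower : 1 <= (IZR M + 2) * INR N * Rabs delta).
  { replace delta with (- (INR N * eps - IZR I)) by (unfold delta; rewrite E; ring).
    rewrite Rabs_Ropp; apply badly_approximable; auto; lia. }
  assert (Hupper : Rabs delta * INR K <= IZR M + 2).
  { apply orbit_translate_small with y; auto.
    intros j Hj; rewrite <- (Hconst j Hj).
    replace (z y j + _) with (z y (j + m)) by ring; apply iter_T3_range; auto. }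
  assert (HNm : INR N <= 2 * INR m).
  { assert (HN2 : (N <= 2 * m)%nat) by lia.
    apply le_INR in HN2; rewrite mult_INR in HN2; simpl in HN2; lra. }
  pose proof (Rabs_pos delta); pose proof (pos_INR K).
  pose proof (bound_ge1 eps eps_bounds eps_irrational M a_le_M) as HM; apply IZR_le in HM.
  set (c := IZR M + 2) in *.
  assert (HKc : INR K <= (Rabs delta * INR K) * (c * INR N)) by nra.
  assert (HcN : (Rabs delta * INR K) * (c * INR N) <= c * (c * INR N))
    by (apply Rmult_le_compat_r; [nra | exact Hupper]).
  replace (c ^ 2) with (c * c) by ring; nra.
Qed.

End BoundedPartialQuotients.

Lemma factor_power_periodic (u : nat -> letter) (v w : list letter) :
  factor u v -> is_power v w ->
  exists i, forall k, (k + length w < length v)%nat ->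
    u (i + k)%nat = u (i + (k + length w))%nat.
Proof.
  intros [i Hi] (_ & _ & Hpow); exists i; intros k Hk.
  rewrite <- !Hi, !Hpow by lia; f_equal.
  rewrite <- (Nat.mul_1_l (length w)) at 2; symmetry; apply Nat.Div0.mod_add.
Qed.

Theorem proposition1 (eps l x0 : R) :
  0 < eps < 1 -> irrational eps ->
  Rmax eps (1 - eps) < l -> l < 1 ->
  0 <= x0 < l ->
  index_infinite (iet3_word eps l x0) ->
  forall N : Z, exists n : nat, (1 <= n)%nat /\ (N < cf_pq eps n)%Z.
Proof.
  intros Heps Hirr Hl1 Hl2 Hx0 Hind M.
  apply NNPP; intros Hbounded.
  assert (HM : forall k, (partial_quotient eps k <= M)%Z).
  { intros k; rewrite <- cf_pq_S; apply Z.nlt_ge; intros Hk.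
    apply Hbounded; exists (S k); split; [lia | exact Hk]. }
  set (c := IZR M + 2).
  destruct (Hind (2 * c ^ 2 + 3)) as (v & w & _ & Hv & Hpow & Hratio).
  destruct (factor_power_periodic _ _ _ Hv Hpow) as [i Hper].
  destruct Hpow as (Hw & Hwv & _).
  set (m := length w) in *; set (L := length v) in *.
  assert (Hm : (1 <= m)%nat) by (unfold m; destruct w; [congruence | simpl; lia]).
  set (y := Nat.iter i (T3 eps l) x0).
  assert (Hword : forall k, iet3_word eps l x0 (i + k) = letter_of eps l (Nat.iter k (T3 eps l) y))
    by (intros k; unfold iet3_word, y; rewrite Nat.add_comm, Nat.iter_add; reflexivity).
  pose proof (periodic_block_bound eps l M Heps Hirr Hl1 Hl2 HM y m (L - m + 1)) as Hbound.
  rewrite plus_INR, minus_INR in Hbound by lia; simpl in Hbound.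
  assert (Hmpos : 0 < INR m) by (apply lt_0_INR; lia).
  apply (Rmult_lt_compat_r (INR m)) in Hratio; [|exact Hmpos].
  unfold Rdiv in Hratio; rewrite Rmult_assoc, Rinv_l, Rmult_1_r in Hratio by lra.
  assert (Hc2 : 0 <= c ^ 2) by (apply pow2_ge_0).
  enough (INR L - INR m + 1 <= 2 * c ^ 2 * INR m) by nra.
  apply Hbound; [apply iter_T3_range; auto | exact Hm | lia |].
  intros k Hk; rewrite <- !Hword; apply Hper; lia.
Qed.
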